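(* Let $4\le p<n$ and let $K_{n+1}=(V,E)$ be the complete graph on $V=\{0,\dots,n\}$. For every edge $e\in E\setminus\{[0,n]\}$, the nonnegativity constraint $y_e\ge 0$ defines a facet of $P^p_{[0,n]}(K_{n+1})$.
   Context: For an undirected graph $G=(V,E)$ with $V=\{0,\dots,n\}$, a $[0,n]$-$p$-path is a simple (undirected) path from $0$ to $n$ with exactly $p$ edges, and $P^p_{[0,n]}(G)\subseteq\mathbb{R}^E$ is the convex hull of the incidence vectors of all $[0,n]$-$p$-paths in $G$. A facet is a face of dimension $\dim P^p_{[0,n]}(K_{n+1})-1$. *)

From HB Require Import structures.
From mathcomp Require Import all_boot all_order all_algebra.
Set Implicit Arguments. Unset Strict Implicit. Unset Printing Implicit Defensive.
Import Order.TTheory GRing.Theory Num.Theory.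
Local Open Scope ring_scope.

(* Vertices of K_{n+1}: 'I_n.+1 = {0,...,n}. Edges: unordered pairs {i,j},
   represented as ordered pairs (i,j) with i < j. *)
Definition edge (n : nat) := {e : 'I_n.+1 * 'I_n.+1 | (e.1 < e.2)%N}.

Definition edge_joins (n : nat) (e : edge n) (u v : 'I_n.+1) : bool :=
  (((val e).1 == u) && ((val e).2 == v)) || (((val e).1 == v) && ((val e).2 == u)).

(* A [0,n]-p-path: a sequence of p+1 pairwise distinct vertices
   v_0 = 0, ..., v_p = n (consecutive vertices are adjacent in K_{n+1}). *)
Definition is_pathp (n p : nat) (t : p.+1.-tuple 'I_n.+1) : bool :=
  [&& uniq t, nth ord0 t 0 == ord0 & nth ord0 t p == ord_max].

Definition incid (R : numDomainType) (n p : nat) (t : p.+1.-tuple 'I_n.+1)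
  : {ffun edge n -> R} :=
  [ffun e => if [exists i : 'I_p, edge_joins e (nth ord0 t i) (nth ord0 t i.+1)]
             then 1 else 0].

Definition path_polytope (R : numDomainType) (n p : nat) (x : {ffun edge n -> R}) : Prop :=
  exists lam : {ffun p.+1.-tuple 'I_n.+1 -> R},
    [/\ forall t, 0 <= lam t,
        forall t, ~~ is_pathp t -> lam t = 0,
        \sum_t lam t = 1
      & forall e, x e = \sum_t lam t * incid R t e].

Definition aff_indep (R : numDomainType) (E : finType) (k : nat)
  (x : 'I_k -> {ffun E -> R}) : Prop :=
  forall c : 'I_k -> R, \sum_i c i = 0 -> (forall e, \sum_i c i * x i e = 0) ->
    forall i, c i = 0.

Definition has_affdim (R : numDomainType) (E : finType) (S : {ffun E -> R} -> Prop)
  (d : nat) : Prop :=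
  (exists x : 'I_d.+1 -> {ffun E -> R}, (forall i, S (x i)) /\ aff_indep x) /\
  (forall x : 'I_d.+2 -> {ffun E -> R}, (forall i, S (x i)) -> ~ aff_indep x).

From HB Require Import structures.
From mathcomp Require Import all_boot all_order all_algebra.
From mathcomp Require Import ring zify.
Import Order.TTheory GRing.Theory Num.Theory.
Local Open Scope ring_scope.
Set Implicit Arguments. Unset Strict Implicit. Unset Printing Implicit Defensive.

(* Every path has p edges, so all points of the polytope lie on the hyperplane
   [sum y = p]; hence affine dimensions are linear dimensions of spans minus one.
   The face [y_e = 0] is spanned by the paths avoiding e, and one path through e
   raises the dimension of that span by exactly one, because the difference of
   any two paths through e lies in the span of the face.  To see this, a path
   ... s r c ... through e = rs, with r interior, is congruent modulo the face
   span to its "detour" (replace r by a vertex y off the path), and any two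
   detours are linked by exchanges of one vertex between two fixed neighbours.
   Each exchange is the difference of two paths avoiding e, which exist since
   p >= 4 leaves room around the exchanged triple and p < n provides a spare
   vertex. *)

Lemma exists_fresh_seq (T : finType) (X : seq T) m : (m + size X <= #|T|)%N ->
  exists F : seq T, [/\ uniq F, size F = m & {in F, forall x, x \notin X}].
Proof.
move=> hm; set L := [seq x <- enum T | x \notin X].
have sizeL : (m <= size L)%N.
  have count_X : (count (mem X) (enum T) <= size X)%N.
    rewrite -size_filter; apply: uniq_leq_size; first exact/filter_uniq/enum_uniq.
    by move=> x; rewrite mem_filter => /andP[].
  rewrite -(leq_add2r (size X)); apply: leq_trans hm _.
  rewrite cardT -(count_predC (mem X) (enum T)) addnC.
  by apply: leq_add => //; rewrite /L size_filter.
exists (take m L); split.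
- exact/take_uniq/filter_uniq/enum_uniq.
- exact/size_takel.
- by move=> x /mem_take; rewrite mem_filter => /andP[].
Qed.

Lemma ffunD (aT : finType) (rT : nmodType) (u v : {ffun aT -> rT}) x :
  (u + v) x = u x + v x.
Proof. by rewrite ffunE. Qed.

Lemma memvB_trans (K : fieldType) (vT : vectType K) (U : {vspace vT}) (u v w : vT) :
  u - v \in U -> v - w \in U -> u - w \in U.
Proof. by move=> huv hvw; rewrite -(subrK v u) -addrA memvD. Qed.

Section AffineDimension.
Variables (R : numFieldType) (E : finType).
Local Notation W := {ffun E -> R^o}.

Lemma free_subseq_span (X : seq W) :
  exists Y, [/\ free Y, {subset Y <= X} & (<<Y>> = <<X>>)%VS].
Proof.
elim: X => [|x X [Y [freeY subYX spanY]]]; first by exists [::]; rewrite nil_free.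
have [xX | xNX] := boolP (x \in <<X>>%VS).
- exists Y; split=> //; first by move=> z /subYX; rewrite inE => ->; rewrite orbT.
  by rewrite span_cons spanY; apply/esym/addv_idPr; rewrite -memvE.
- exists (x :: Y); split; first by rewrite free_cons spanY xNX.
  + by move=> z; rewrite !inE => /orP[->|/subYX ->]; rewrite ?orbT.
  + by rewrite !span_cons spanY.
Qed.

Lemma aff_indep_free k (x : 'I_k -> {ffun E -> R}) (c : R) : c != 0 ->
  (forall i, \sum_f x i f = c) -> aff_indep x <-> free [tuple (x i : W) | i < k].
Proof.
move=> c_neq0 sum_x; split=> [indep | /freeP free_x coef _ comb_eq0].
- apply/freeP => coef comb_eq0.
  have comb_f f : \sum_i coef i * x i f = 0.
    have := congr1 (fun v : W => v f) comb_eq0; rewrite /= sum_ffunE ffunE => comb.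
    by rewrite -[RHS]comb; apply: eq_bigr => i _; rewrite ffunE nth_mktuple.
  suff sum_coef : \sum_i coef i = 0 by apply: indep sum_coef comb_f.
  apply/eqP; rewrite -(mulIr_eq0 _ (mulIf c_neq0)) mulr_suml.
  rewrite (eq_bigr (fun i => \sum_f coef i * x i f)) => [|i _]; last first.
    by rewrite -mulr_sumr sum_x.
  by rewrite exchange_big big1.
- apply: free_x; apply/ffunP => f; rewrite sum_ffunE ffunE -[RHS](comb_eq0 f).
  by apply: eq_bigr => i _; rewrite ffunE nth_mktuple.
Qed.

Lemma has_affdim_span (S : {ffun E -> R} -> Prop) (X : seq W) (c : R) d :
  c != 0 -> (forall x, x \in X -> S x) -> (forall y, S y -> (y : W) \in <<X>>%VS) ->
  (forall y, S y -> \sum_f y f = c) -> \dim <<X>> = d.+1 -> has_affdim S d.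
Proof.
move=> c_neq0 X_S S_X sum_S dimX; split.
- have [Y [freeY subYX spanY]] := free_subseq_span X.
  have sizeY : size Y == d.+1 by rewrite -dimX -spanY (eqP freeY).
  pose T : d.+1.-tuple W := Tuple sizeY.
  have T_S (i : 'I_d.+1) : S T`_i.
    by apply: X_S; apply: subYX; apply: mem_nth; rewrite (eqP sizeY).
  exists (fun i => T`_i); split=> //.
  apply/(aff_indep_free c_neq0) => [i|]; first exact: sum_S.
  suff -> : [tuple (T`_i : W) | i < d.+1] = T by [].
  by apply: eq_from_tnth => i; rewrite tnth_mktuple (tnth_nth 0).
- move=> x x_S /(aff_indep_free c_neq0 (fun i => sum_S _ (x_S i))) freeT.
  have: (<<[tuple (x i : W) | i < d.+2]>> <= <<X>>)%VS.
    apply/span_subvP => v /(nthP 0)[j]; rewrite size_tuple => jlt <-.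
    by rewrite (nth_mktuple _ _ (Ordinal jlt)); apply: S_X.
  by move/dimvS; rewrite (eqP freeT) size_tuple dimX ltnn.
Qed.

End AffineDimension.

Lemma perm_mid (T : eqType) (A B : seq T) a y b :
  perm_eq (A ++ [:: a, y, b & B]) (y :: A ++ [:: a, b & B]).
Proof. by apply/permP => P; rewrite /= !count_cat /=; lia. Qed.

Section VertexSequences.
Variables (R : numFieldType) (n : nat).
Local Notation V := 'I_n.+1.
Local Notation VV := {ffun edge n -> R^o}.

Lemma edge_joinsC (f : edge n) (a b : V) : edge_joins f a b = edge_joins f b a.
Proof. by rewrite /edge_joins orbC. Qed.

Lemma edge_joins_eq (f : edge n) (u v a b : V) : edge_joins f u v -> edge_joins f a b ->
  (a = u /\ b = v) \/ (a = v /\ b = u).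
Proof.
by rewrite /edge_joins => /orP[]/andP[/eqP<- /eqP<-] /orP[]/andP[/eqP-> /eqP->]; tauto.
Qed.

Lemma edge_joins_neq (f : edge n) (a b : V) : edge_joins f a b -> a != b.
Proof.
case: f => [[u v] /= uv] /orP[]/andP[/eqP<- /eqP<-].
all: by rewrite /=; move: uv; apply: contraTneq => ->; rewrite ltnn.
Qed.

Lemma exists_edge_joins (a b : V) : a != b -> exists f : edge n, edge_joins f a b.
Proof.
case: (ltngtP a b) => [ab | ba | /val_inj->]; last by rewrite eqxx.
- by exists (exist _ (a, b) ab); rewrite /edge_joins /= !eqxx.
- by exists (exist _ (b, a) ba); rewrite /edge_joins /= !eqxx orbT.
Qed.

Lemma edge_joins_inj (f g : edge n) (a b : V) :
  edge_joins f a b -> edge_joins g a b -> f = g.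
Proof.
case: f g => [[u v] uv] [[u' v'] uv'] /orP[]/andP[/eqP/= eu /eqP/= ev]
  /orP[]/andP[/eqP/= eu' /eqP/= ev']; apply: val_inj; subst => //=.
all: by move: uv' => /(ltn_trans uv); rewrite ltnn.
Qed.

Definition evec (a b : V) : VV := [ffun f => if edge_joins f a b then 1 else 0].

Fixpoint pvec (s : seq V) : VV :=
  if s is a :: ((b :: _) as s') then evec a b + pvec s' else 0.

Lemma pvec_cons2 a b s : pvec [:: a, b & s] = evec a b + pvec (b :: s).
Proof. by []. Qed.

Definition swapv (a b x z : V) : VV := pvec [:: a; x; b] - pvec [:: a; z; b].

Lemma swapvE a b x z : swapv a b x z = evec a x + evec x b - evec a z - evec z b.
Proof. by rewrite /swapv /= !addr0 opprD addrA. Qed.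

Lemma evecC a b : evec a b = evec b a.
Proof. by apply/ffunP => f; rewrite !ffunE edge_joinsC. Qed.

Lemma evec_ge0 a b f : 0 <= evec a b f.
Proof. by rewrite ffunE; case: ifP. Qed.

Lemma evec_eq0 (f : edge n) (u v a b : V) : edge_joins f u v -> u \notin [:: a; b] ->
  evec a b f = 0.
Proof.
move=> fuv uNab; rewrite ffunE; case: ifP => // /(edge_joins_eq fuv) [[au _] | [_ bu]].
all: by move: uNab; rewrite !inE ?au ?bu eqxx ?orbT.
Qed.

Lemma pvec_ge0 s f : 0 <= pvec s f.
Proof.
elim: s => [|a [|b s] IH]; try by rewrite ffunE.
by rewrite /= ffunD addr_ge0 ?evec_ge0.
Qed.

Lemma pvec_cat A a s : pvec (A ++ a :: s) = pvec (rcons A a) + pvec (a :: s).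
Proof.
elim: A => [|x [|y A] IH] /=; first by rewrite add0r.
  by rewrite addr0.
by move: IH => /= ->; rewrite addrA.
Qed.

Lemma pvec_rev s : pvec (rev s) = pvec s.
Proof.
elim: s => [|a [|b s] IH] //.
have -> : rev [:: a, b & s] = rev s ++ [:: b; a] by rewrite !rev_cons -!cats1 -catA.
by rewrite pvec_cat -rev_cons IH /= addr0 addrC evecC.
Qed.

Lemma pvec_swap A B a x b z :
  pvec (A ++ [:: a, x, b & B]) - pvec (A ++ [:: a, z, b & B]) = swapv a b x z.
Proof. by rewrite !pvec_cat /swapv /=; apply/ffunP => f; rewrite !ffunE; ring. Qed.

Lemma swapvC a b x z : swapv a b x z = swapv b a x z.
Proof. by rewrite /swapv -[pvec [:: b; x; a]]pvec_rev -[pvec [:: b; z; a]]pvec_rev. Qed.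

Lemma pvec_eq0_notin (f : edge n) (u v : V) (s : seq V) : edge_joins f u v -> u \notin s ->
  pvec s f = 0.
Proof.
move=> fuv; elim: s => [|a [|b s] IH] uNabs; try by rewrite ffunE.
rewrite /= ffunD IH; last by move: uNabs; rewrite inE negb_or => /andP[].
rewrite (evec_eq0 fuv) ?addr0 //.
by apply: contra uNabs; rewrite !inE => /orP[] ->; rewrite ?orbT.
Qed.

Lemma pvec_split (f : edge n) s : pvec s f != 0 ->
  exists A u v B, s = A ++ [:: u, v & B] /\ edge_joins f u v.
Proof.
elim: s => [|a [|b s] IH]; try by rewrite ffunE eqxx.
rewrite /= ffunD ffunE; case: ifP => [fab _ | _]; first by exists [::], a, b, s.
rewrite add0r => /IH [A [u [v [B [-> fuv]]]]].
by exists (a :: A), u, v, B.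
Qed.

Lemma evec_le_pvec A B a b f : evec a b f <= pvec (A ++ [:: a, b & B]) f.
Proof.
rewrite pvec_cat pvec_cons2 !ffunD addrCA lerDl.
by rewrite addr_ge0 ?pvec_ge0.
Qed.

Lemma pvec_sum s : pvec s = \sum_(i < (size s).-1) evec (nth ord0 s i) (nth ord0 s i.+1).
Proof.
elim: s => [|a [|b s] IH]; rewrite ?big_ord0 //.
by rewrite pvec_cons2 big_ord_recl IH.
Qed.

Lemma uniq_edge_index (f : edge n) s i j : uniq s ->
  (i.+1 < size s)%N -> (j.+1 < size s)%N ->
  edge_joins f (nth ord0 s i) (nth ord0 s i.+1) ->
  edge_joins f (nth ord0 s j) (nth ord0 s j.+1) -> i = j.
Proof.
move=> s_uniq ilt jlt fi /(edge_joins_eq fi).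
have nthK k l : (k < size s)%N -> (l < size s)%N -> nth ord0 s k = nth ord0 s l -> k = l.
  by move=> kl ll /eqP; rewrite nth_uniq // => /eqP.
by case=> [[/nthK e1 /nthK e2] | [/nthK e1 /nthK e2]];
  move: (e1 ltac:(lia) ltac:(lia)) (e2 ltac:(lia) ltac:(lia)); lia.
Qed.

Lemma sum_evec (a b : V) : a != b -> \sum_f evec a b f = 1.
Proof.
move=> /exists_edge_joins [f fab].
rewrite (bigD1 f) //= ffunE fab big1 ?addr0 // => g gf; rewrite ffunE.
by case: ifP => // gab; move: gf; rewrite (edge_joins_inj gab fab) eqxx.
Qed.

Lemma sum_pvec s : uniq s -> \sum_f pvec s f = ((size s).-1)%:R.
Proof.
elim: s => [|a [|b s] IH] s_uniq; try by rewrite big1 // => f _; rewrite ffunE.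
under eq_bigr do rewrite pvec_cons2 ffunD.
rewrite big_split /= IH; last by case/andP: s_uniq.
rewrite sum_evec -?natr1 1?addrC //.
by move: s_uniq; rewrite /= inE negb_or => /andP[/andP[]].
Qed.

Lemma incid_pvec p (t : p.+1.-tuple V) : uniq t -> (incid R t : VV) = pvec t.
Proof.
move=> t_uniq; apply/ffunP => f.
rewrite pvec_sum size_tuple sum_ffunE ffunE.
case: existsP => [[i fi] | noedge]; last first.
  by rewrite big1 // => j _; rewrite ffunE; case: ifP => // fj; case: noedge; exists j.
rewrite (bigD1 i) //= ffunE fi big1 ?addr0 // => j ji; rewrite ffunE.
case: ifP => // fj; case/eqP: ji; apply/val_inj.
by apply: (uniq_edge_index t_uniq) fj fi; rewrite size_tuple ltnS.
Qed.

End VertexSequences.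

Section PathFace.
Variables (R : numFieldType) (n p : nat).
Hypotheses (p_ge4 : (4 <= p)%N) (p_lt_n : (p < n)%N).
Variable e : edge n.
Hypothesis e_not0n : val e != (ord0, ord_max).
Local Notation V := 'I_n.+1.
Local Notation VV := {ffun edge n -> R^o}.
Local Notation pvec := (@pvec R n).
Local Notation swapv := (@swapv R n).

Definition inner (x : V) := (x != ord0) && (x != ord_max).

Definition pathseq (q : seq V) :=
  [&& uniq q, size q == p.+1 &
   [|| (head ord0 q == ord0) && (last ord0 q == ord_max)
     | (head ord0 q == ord_max) && (last ord0 q == ord0)]].

Lemma ord0_neq_max : (ord0 : V) != ord_max.
Proof. by apply/eqP => /(congr1 val) /=; lia. Qed.

Lemma pathseq_of_path (t : p.+1.-tuple V) : is_pathp t -> pathseq t.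
Proof.
case/and3P => t_uniq /eqP t0 /eqP tp.
by rewrite /pathseq t_uniq size_tuple -nth0 t0 -(nth_last ord0) size_tuple tp !eqxx.
Qed.

Lemma pathseq_tuple (q : seq V) :
  pathseq q -> exists t : p.+1.-tuple V, is_pathp t /\ pvec t = pvec q.
Proof.
case/and3P => q_uniq /eqP q_size ends.
have rq_size : size (rev q) == p.+1 by rewrite size_rev q_size.
have nth_p (s : seq V) : size s = p.+1 -> nth ord0 s p = last ord0 s.
  by move=> s_size; rewrite -(nth_last ord0) s_size.
case/orP: ends => /andP[/eqP q0 /eqP qp].
- exists (Tuple (introT eqP q_size)); rewrite /is_pathp /= q_uniq nth0 q0 nth_p //.
  by rewrite qp !eqxx.
- exists (Tuple rq_size); rewrite /is_pathp /= rev_uniq q_uniq pvec_rev; split=> //.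
  by rewrite !nth_rev ?q_size // !subSS subn0 subnn nth0 nth_p // q0 qp !eqxx.
Qed.

Lemma pathseq_frame (u : V) (L : seq V) (w : V) : ~~ inner u -> ~~ inner w -> u != w ->
  uniq L -> all inner L -> size L = p.-1 -> pathseq (u :: L ++ [:: w]).
Proof.
move=> u_end w_end uw L_uniq /allP L_inner L_size.
have notin_L x : ~~ inner x -> x \notin L by apply: contra => /L_inner.
rewrite /pathseq cons_uniq mem_cat inE negb_or notin_L // uw cat_uniq L_uniq.
rewrite /= orbF notin_L // size_cat L_size addn1 prednK ?(leq_trans _ p_ge4) //.
rewrite eqxx last_cat /=.
move: u_end w_end uw; rewrite /inner !negb_and !negbK.
by case/orP => /eqP-> /orP[]/eqP->; rewrite ?eqxx ?orbT.
Qed.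

Lemma pathseq_inner (A : seq V) (x : V) (B : seq V) :
  pathseq (A ++ x :: B) -> A != [::] -> B != [::] -> inner x.
Proof.
case: A => [|a A] //; case/lastP: B => [|B b] // /and3P[q_uniq _ ends] _ _.
have xa : x != a.
  case/andP: q_uniq => aN _; apply: contraNneq aN => ->.
  by rewrite mem_cat mem_head orbT.
have xb : x != b.
  have /andP[xN _] : uniq (x :: rcons B b).
    by move: q_uniq; rewrite cat_uniq => /and3P[].
  by apply: contraNneq xN => ->; rewrite mem_rcons mem_head.
move: ends; rewrite /= last_cat /= last_rcons /inner.
by case/orP=> /andP[/eqP<- /eqP<-]; rewrite xa xb.
Qed.

Lemma notin_swap (A B : seq V) (a x b z : V) : uniq (A ++ [:: a, x, b & B]) -> x != z ->
  x \notin A ++ [:: a, z, b & B].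
Proof.
rewrite (perm_uniq (perm_mid A B a x b)) (perm_mem (perm_mid A B a z b)) inE negb_or.
by case/andP => -> _ ->.
Qed.

Lemma pathseq_swap (A B : seq V) (a x b z : V) : pathseq (A ++ [:: a, x, b & B]) ->
  z \notin A ++ [:: a, x, b & B] -> pathseq (A ++ [:: a, z, b & B]).
Proof.
case/and3P => q_uniq q_size ends.
rewrite (perm_uniq (perm_mid A B a x b)) cons_uniq in q_uniq.
rewrite (perm_mem (perm_mid A B a x b)) inE negb_or.
case/andP: q_uniq => _ rest_uniq /andP[_ zN].
rewrite /pathseq (perm_uniq (perm_mid A B a z b)) cons_uniq zN rest_uniq.
move: q_size ends; rewrite !size_cat !last_cat /= => ->.
by case: A {rest_uniq zN}.
Qed.

Lemma exists_pathseq_through (a : V) (M X : seq V) :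
  uniq (a :: M) -> all inner M -> all inner X ->
  (size M < p.-1)%N -> (size X <= n - p)%N ->
  exists A B, [/\ pathseq (A ++ a :: M ++ B), {subset A <= [:: ord0]}
                & {in X, forall y, y \notin B}].
Proof.
move=> aM_uniq M_inner /allP X_inner M_size X_size.
pose fresh (T F : seq V) := {in F, forall x, x \notin [:: ord0, ord_max & T ++ X]}.
have exists_fresh (T : seq V) m :
    (m + size T <= p.-1)%N -> exists F, [/\ uniq F, size F = m & fresh T F].
  by move=> m_le; apply: exists_fresh_seq; rewrite card_ord /= size_cat; lia.
have frame (u : V) (T F : seq V) (w : V) : ~~ inner u -> ~~ inner w -> u != w ->
    uniq T -> all inner T -> uniq F -> fresh T F -> size (T ++ F) = p.-1 ->
    pathseq (u :: (T ++ F) ++ [:: w]) /\ {in X, forall y, y \notin F ++ [:: w]}.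
  move=> u_end w_end uw T_uniq T_inner F_uniq F_fresh TF_size; split.
    apply: pathseq_frame => //.
      rewrite cat_uniq T_uniq F_uniq andbT; apply/hasPn => x /F_fresh.
      by apply: contra => xT; rewrite !inE mem_cat xT !orbT.
    rewrite all_cat T_inner; apply/allP => x /F_fresh.
    by rewrite !inE !negb_or /inner => /andP[-> /andP[-> _]].
  move=> y yX; rewrite mem_cat inE negb_or; apply/andP; split.
    by apply/negP => /F_fresh; rewrite !inE mem_cat yX !orbT.
  by apply: contraNneq w_end => <-; apply: X_inner.
have [a_inner | a_end] := boolP (inner a).
- have [F [F_uniq F_size F_fresh]] := exists_fresh (a :: M) (p.-2 - size M)%N
    ltac:(rewrite /=; lia).
  have TF_size : size ((a :: M) ++ F) = p.-1 by rewrite size_cat /= F_size; lia.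
  have [q_path X_notin] := frame ord0 (a :: M) F ord_max
    ltac:(by rewrite /inner eqxx) ltac:(by rewrite /inner eqxx andbF) ord0_neq_max
    aM_uniq ltac:(by rewrite /= a_inner) F_uniq F_fresh TF_size.
  by exists [:: ord0], (F ++ [:: ord_max]); split; rewrite // cat1s -cat_cons catA.
- pose w : V := if a == ord0 then ord_max else ord0.
  have [F [F_uniq F_size F_fresh]] := exists_fresh M (p.-1 - size M)%N ltac:(lia).
  have TF_size : size (M ++ F) = p.-1 by rewrite size_cat F_size; lia.
  have w_end : ~~ inner w by rewrite /w /inner; case: ifP; rewrite eqxx ?andbF.
  have aw : a != w.
    move: a_end; rewrite /w /inner negb_and !negbK.
    case: eqP => [-> _|_ /= /eqP ->]; [exact: ord0_neq_max | by rewrite eq_sym ord0_neq_max].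
  have [q_path X_notin] := frame a M F w a_end w_end aw
    ltac:(by case/andP: aM_uniq) M_inner F_uniq F_fresh TF_size.
  by exists [::], (F ++ [:: w]); split; rewrite // catA.
Qed.

Definition paths := [seq t <- enum {: p.+1.-tuple V} | is_pathp t].
Definition path_vecs : seq VV := [seq incid R t | t <- paths].
Definition face_vecs : seq VV := [seq incid R t | t <- paths & incid R t e == 0].
Local Notation face := <<face_vecs>>%VS.

Lemma mem_paths (t : p.+1.-tuple V) : (t \in paths) = is_pathp t.
Proof. by rewrite mem_filter mem_enum andbT. Qed.

Lemma incid_path (t : p.+1.-tuple V) : is_pathp t -> (incid R t : VV) = pvec t.
Proof. by case/and3P => t_uniq _ _; apply: incid_pvec. Qed.

Lemma pvec_in_face (q : seq V) : pathseq q -> pvec q e = 0 -> pvec q \in face.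
Proof.
move=> /pathseq_tuple[t [t_path <-]] qe0; rewrite -incid_path //; apply: memv_span.
by apply/mapP; exists t; rewrite // mem_filter incid_path // qe0 eqxx mem_paths.
Qed.

Lemma swapv_in_face (A B : seq V) (a x b z : V) : pathseq (A ++ [:: a, x, b & B]) ->
  z \notin A ++ [:: a, x, b & B] -> pvec (A ++ [:: a, x, b & B]) e = 0 ->
  pvec (A ++ [:: a, z, b & B]) e = 0 -> swapv a b x z \in face.
Proof.
move=> q_path zN qe0 q'e0; rewrite -(@pvec_swap R n A B).
by apply: memvB; apply: pvec_in_face => //; apply: (pathseq_swap q_path zN).
Qed.

Lemma exists_pathseq_triple (a x b z : V) :
  uniq [:: a; x; b; z] -> inner x -> inner b -> inner z ->
  exists A B, [/\ pathseq (A ++ [:: a, x, b & B]), z \notin A ++ [:: a, x, b & B]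
                & {subset A <= [:: ord0]}].
Proof.
move=> axbz_uniq x_inner b_inner z_inner.
have [|||||A [B [q_path A0 zB]]] :=
  exists_pathseq_through (a := a) (M := [:: x; b]) (X := [:: z]).
- by move: axbz_uniq; rewrite -[[:: a; x; b; z]]/([:: a; x; b] ++ [:: z]) cat_uniq => /andP[].
- by rewrite /= x_inner b_inner.
- by rewrite /= z_inner.
- by rewrite /=; lia.
- by rewrite /=; lia.
have zNaxb : z \notin [:: a; x; b].
  by move: axbz_uniq; rewrite -[[:: a; x; b; z]]/([:: a; x; b] ++ [:: z]) cat_uniq
    => /and3P[_ /norP[]].
exists A, B; split=> //; rewrite mem_cat negb_or; apply/andP; split.
  by apply/negP => /A0; rewrite inE => /eqP z0; move: z_inner; rewrite z0 /inner eqxx.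
by rewrite -[[:: a, x, b & B]]/([:: a; x; b] ++ B) mem_cat negb_or zNaxb zB ?mem_head.
Qed.

Lemma pvec_eq0_neighbours (A B : seq V) (a w v : V) :
  {subset A <= [:: ord0]} -> edge_joins e a v -> inner v -> v != w ->
  uniq (A ++ [:: a, w & B]) -> pvec (A ++ [:: a, w & B]) e = 0.
Proof.
move=> A0 eav v_inner vw q_uniq.
have eva : edge_joins e v a by rewrite edge_joinsC.
have va : v != a by rewrite (edge_joins_neq eva).
rewrite pvec_cat pvec_cons2 !ffunD (evec_eq0 _ eva) ?add0r; last by rewrite !inE negb_or va.
rewrite (pvec_eq0_notin _ eva) ?add0r; last first.
  rewrite mem_rcons inE negb_or va; apply/negP => /A0; rewrite inE => /eqP v0.
  by move: v_inner; rewrite v0 /inner eqxx.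
apply: (pvec_eq0_notin _ eav).
by move: q_uniq; rewrite cat_uniq => /and3P[_ _ /andP[]].
Qed.

Lemma swapv_at_end (a x b z v : V) : edge_joins e a v -> inner v -> v != x -> v != z ->
  uniq [:: a; x; b; z] -> inner x -> inner b -> inner z -> swapv a b x z \in face.
Proof.
move=> eav v_inner vx vz axbz_uniq x_inner b_inner z_inner.
have [A [B [q_path zN A0]]] := exists_pathseq_triple axbz_uniq x_inner b_inner z_inner.
apply: (swapv_in_face q_path zN); apply: (pvec_eq0_neighbours A0 eav v_inner) => //.
- by case/and3P: q_path.
- by case/and3P: (pathseq_swap q_path zN).
Qed.

Lemma swapv_across (a x b z : V) : edge_joins e x z -> uniq [:: a; x; b; z] ->
  inner x -> inner b -> inner z -> swapv a b x z \in face.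
Proof.
move=> exz axbz_uniq x_inner b_inner z_inner.
have [A [B [q_path zN _]]] := exists_pathseq_triple axbz_uniq x_inner b_inner z_inner.
have ezx : edge_joins e z x by rewrite edge_joinsC.
apply: (swapv_in_face q_path zN); first exact: (pvec_eq0_notin _ ezx).
apply: (pvec_eq0_notin _ exz); apply: notin_swap; first by case/and3P: q_path.
by apply: contraTneq axbz_uniq => ->; rewrite /= !inE eqxx !orbT andbF.
Qed.

Ltac solve_uniq := rewrite /= !inE !negb_or; repeat (apply/andP; split); rewrite // eq_sym //.

(* A path ... s r c ... through e = rs changes by [detour r s c y] when its
   vertex r is replaced by a vertex y off the path. *)
Definition detour (r s c y : V) : VV := swapv s c r y.

Definition detour_ok (r s c y : V) :=
  [&& edge_joins e r s, inner r, inner c, inner y & uniq [:: r; s; c; y]].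

Lemma detour_eqv_y r s c y y' : detour_ok r s c y -> detour_ok r s c y' ->
  detour r s c y - detour r s c y' \in face.
Proof.
case/and5P => ers r_inner c_inner y_inner.
rewrite /= !inE !negb_or => /and4P[/and3P[rs rc ry] /andP[sc sy] cy _].
case/and5P => _ _ _ y'_inner.
rewrite /= !inE !negb_or => /and4P[/and3P[_ _ ry'] /andP[_ sy'] cy' _].
have [<-|yy'] := eqVneq y y'; first by rewrite subrr mem0v.
have -> : detour r s c y - detour r s c y' = swapv s c y' y.
  by rewrite /detour !swapvE; apply/ffunP => f; rewrite !ffunE; ring.
apply: (swapv_at_end (v := r)) => //; first by rewrite edge_joinsC.
solve_uniq.
Qed.

Lemma detour_eqv_c r s c c' : detour_ok r s c c' ->
  detour r s c c' - detour r s c' c \in face.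
Proof.
case/and5P => ers r_inner c_inner c'_inner.
rewrite /= !inE !negb_or => /and4P[/and3P[rs rc rc'] /andP[sc sc'] cc' _].
have -> : detour r s c c' - detour r s c' c = swapv s r c c'.
  rewrite /detour !swapvE (evecC _ c' c) (evecC _ c r) (evecC _ c' r).
  by apply/ffunP => f; rewrite !ffunE; ring.
apply: (swapv_at_end (v := r)) => //; first by rewrite edge_joinsC.
solve_uniq.
Qed.

Lemma detour_eqv_flip r s c y : detour_ok r s c y -> inner s ->
  detour r s c y - detour s r c y \in face.
Proof.
case/and5P => ers r_inner c_inner y_inner.
rewrite /= !inE !negb_or => /and4P[/and3P[rs rc ry] /andP[sc sy] cy _] s_inner.
have -> : detour r s c y - detour s r c y = swapv c y r s.
  rewrite /detour !swapvE (evecC _ r s) (evecC _ c r) (evecC _ c s).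
  by apply/ffunP => f; rewrite !ffunE; ring.
by apply: swapv_across => //; solve_uniq.
Qed.

Lemma detour_eqv_edge r s c y c' y' : detour_ok r s c y -> detour_ok r s c' y' ->
  detour r s c y - detour r s c' y' \in face.
Proof.
have [<-|cc' ok1 ok2] := eqVneq c c'; first exact: detour_eqv_y.
move: (ok1) (ok2) => /and5P[ers r_inner c_inner _ uniq1] /and5P[_ _ c'_inner _ uniq2].
move: uniq1 uniq2; rewrite /= !inE !negb_or.
move=> /and4P[/and3P[rs rc _] /andP[sc _] _ _] /and4P[/and3P[_ rc' _] /andP[sc' _] _ _].
have ok3 : detour_ok r s c c' by rewrite /detour_ok ers r_inner c_inner c'_inner; solve_uniq.
have ok4 : detour_ok r s c' c by rewrite /detour_ok ers r_inner c_inner c'_inner; solve_uniq.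
apply: (memvB_trans (detour_eqv_y ok1 ok3)).
apply: (memvB_trans (detour_eqv_c ok3)).
exact: detour_eqv_y ok4 ok2.
Qed.

Lemma detour_eqv r s c y r' s' c' y' : detour_ok r s c y -> detour_ok r' s' c' y' ->
  detour r s c y - detour r' s' c' y' \in face.
Proof.
move=> ok1 ok2; have ers : edge_joins e r s by case/and5P: ok1.
have ers' : edge_joins e r' s' by case/and5P: ok2.
case: (edge_joins_eq ers ers') ok2 => [[-> ->] | [-> ->]]; first exact: detour_eqv_edge.
move: (ok1) => /and5P[_ r_inner _ _ _] /and5P[_ s_inner c'_inner y'_inner].
rewrite /= !inE !negb_or => /and4P[/and3P[sr sc' sy'] /andP[rc' ry'] c'y' _].
have ok3 : detour_ok r s c' y'.
  by rewrite /detour_ok ers r_inner c'_inner y'_inner; solve_uniq.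
apply: (memvB_trans (detour_eqv_edge ok1 ok3)).
exact: detour_eqv_flip.
Qed.

Lemma pvec_detour_in_face (A B : seq V) (a x b y w : V) :
  pathseq (A ++ [:: a, x, b & B]) -> edge_joins e x w ->
  y \notin A ++ [:: a, x, b & B] ->
  pvec (A ++ [:: a, x, b & B]) - swapv a b x y \in face.
Proof.
move=> q_path exw yN; rewrite -(@pvec_swap R n A B) subKr.
apply: pvec_in_face; first exact: (pathseq_swap q_path yN).
apply: (pvec_eq0_notin _ exw); apply: notin_swap; first by case/and3P: q_path.
by apply: contraNneq yN => <-; rewrite mem_cat !inE eqxx !orbT.
Qed.

Lemma pathseq_detour_split (q : seq V) : pathseq q -> pvec q e != 0 ->
  exists A B r s c, [/\ q = A ++ [:: s, r, c & B] \/ q = A ++ [:: c, r, s & B],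
                       edge_joins e r s, inner r & inner c].
Proof.
move=> q_path /pvec_split[A [u [v [B [q_eq euv]]]]].
have q_size : size q = p.+1 by case/and3P: q_path => _ /eqP.
have [B_big | B_small] := ltnP 1 (size B).
- case: B B_big q_eq => [|c [|c' B]] // _ q_eq.
  exists A, (c' :: B), v, u, c; split; [by left | by rewrite edge_joinsC | |].
  + apply: (@pathseq_inner (A ++ [:: u]) v [:: c, c' & B]); last by [].
      by rewrite -catA -q_eq.
    by case: (A).
  + apply: (@pathseq_inner (A ++ [:: u; v]) c (c' :: B)); last by [].
      by rewrite -catA -q_eq.
    by case: (A).
- case/lastP: A q_eq => [|A c] q_eq; first by move: q_size; rewrite q_eq /=; lia.
  have A_nil : A != [::].
    by apply/eqP => A0; move: q_size; rewrite q_eq A0 /=; lia.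
  rewrite cat_rcons in q_eq.
  exists A, B, u, v, c; split; [by right | exact: euv | |].
  + apply: (@pathseq_inner (rcons A c) u (v :: B)); last by [].
      by rewrite cat_rcons -q_eq.
    by case: (A).
  + by apply: (@pathseq_inner A c [:: u, v & B]); rewrite // -q_eq.
Qed.

Lemma pathseq_ends_mem (q : seq V) : pathseq q -> (ord0 \in q) && (ord_max \in q).
Proof.
case: q => [|x q] /and3P[_ // _] /= /orP[]/andP[/eqP-> /eqP<-].
all: by rewrite mem_head mem_last.
Qed.

Lemma uniq_infix3 (A B : seq V) (a x b y : V) : uniq (A ++ [:: a, x, b & B]) ->
  y \notin A ++ [:: a, x, b & B] -> uniq [:: a; x; b; y].
Proof.
have sub : subseq [:: a; x; b] (A ++ [:: a, x, b & B]).
  by apply: subseq_trans (suffix_subseq A _); apply: (prefix_subseq _ B).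
move=> /(subseq_uniq sub) axb_uniq yN.
rewrite -[[:: a; x; b; y]]/(rcons [:: a; x; b] y) rcons_uniq axb_uniq andbT.
by apply: contra yN => /(mem_subseq sub).
Qed.

Lemma pvec_eqv_detour (q : seq V) : pathseq q -> pvec q e != 0 ->
  exists r s c y, detour_ok r s c y /\ pvec q - detour r s c y \in face.
Proof.
move=> q_path q_e.
have [y yN] : exists y : V, y \notin q.
  have [|[|y F] [_ F_size F_fresh]] := @exists_fresh_seq _ q 1 => //.
    by case/and3P: q_path => _ /eqP ->; rewrite card_ord.
  by exists y; apply: F_fresh; rewrite mem_head.
have y_inner : inner y.
  case/andP: (pathseq_ends_mem q_path) => q0 qmax.
  by apply/andP; split; apply: contraNneq yN => ->.
have q_uniq : uniq q by case/and3P: q_path.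
have [A [B [r [s [c [[q_eq|q_eq] ers r_inner c_inner]]]]]] :=
  pathseq_detour_split q_path q_e.
all: exists r, s, c, y; rewrite /detour_ok ers r_inner c_inner y_inner.
all: rewrite q_eq in q_path q_uniq yN *; have := uniq_infix3 q_uniq yN.
- have perm : perm_eq [:: s; r; c; y] [:: r; s; c; y].
    by rewrite (perm_catCA [:: s] [:: r] [:: c; y]) perm_refl.
  rewrite -(perm_uniq perm) => ->; split; first by [].
  exact: pvec_detour_in_face q_path ers yN.
- have perm : perm_eq [:: c; r; s; y] [:: r; s; c; y].
    by rewrite (perm_catCA [:: c] [:: r; s] [:: y]) perm_refl.
  rewrite -(perm_uniq perm) => ->; split; first by [].
  by rewrite /detour swapvC; apply: pvec_detour_in_face q_path ers yN.
Qed.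

Lemma pvec_eqv_through_e (q1 q2 : seq V) : pathseq q1 -> pathseq q2 ->
  pvec q1 e != 0 -> pvec q2 e != 0 -> pvec q1 - pvec q2 \in face.
Proof.
move=> /pvec_eqv_detour h1 /pvec_eqv_detour h2 /h1[r [s [c [y [ok1 eqv1]]]]].
move=> /h2[r' [s' [c' [y' [ok2 eqv2]]]]].
apply: (memvB_trans eqv1); apply: (memvB_trans (detour_eqv ok1 ok2)).
by rewrite -opprB memvN.
Qed.

Lemma exists_inner_end : exists r s, edge_joins e r s /\ inner r.
Proof.
move: e_not0n; case: e => [[u v] uv] /= uv_not0n.
have [v_max | v_not_max] := eqVneq v ord_max.
- exists u, v; rewrite /edge_joins /= !eqxx /inner; split=> //.
  rewrite -v_max; apply/andP; split; first by apply: contraNneq uv_not0n => ->; rewrite v_max.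
  by apply: contraTneq uv => ->; rewrite ltnn.
- exists v, u; rewrite /edge_joins /= !eqxx orbT /inner v_not_max andbT; split=> //.
  by apply: contraTneq uv => ->.
Qed.

Lemma exists_pathseq_avoid : exists q, pathseq q /\ pvec q e = 0.
Proof.
have [r [s [ers r_inner]]] := exists_inner_end.
have [|||||A [B [q_path A0 rB]]] :=
  exists_pathseq_through (a := ord0) (M := [::]) (X := [:: r]).
- by [].
- by [].
- by rewrite /= r_inner.
- by rewrite /=; lia.
- by rewrite /=; lia.
exists (A ++ ord0 :: B); split=> //; apply: (pvec_eq0_notin _ ers).
rewrite mem_cat inE !negb_or (rB r (mem_head _ _)) andbT; case/andP: r_inner => r0 _.
by rewrite r0 andbT; apply/negP => /A0; rewrite inE (negbTE r0).
Qed.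

Lemma exists_pathseq_through_e : exists q, pathseq q /\ pvec q e != 0.
Proof.
have [r [s [ers r_inner]]] := exists_inner_end.
have [|||||A [B [q_path _ _]]] :=
  exists_pathseq_through (a := s) (M := [:: r]) (X := [::]).
- by rewrite /= inE andbT eq_sym (edge_joins_neq ers).
- by rewrite /= r_inner.
- by [].
- by rewrite /=; lia.
- by [].
exists (A ++ [:: s, r & B]); split=> //; rewrite gt_eqF //.
apply: (lt_le_trans _ (evec_le_pvec R A B s r e)).
by rewrite ffunE edge_joinsC ers ltr01.
Qed.

Lemma path_polytope_incid (t : p.+1.-tuple V) :
  is_pathp t -> path_polytope p (incid R t).
Proof.
move=> t_path; exists [ffun t' => (t' == t)%:R]; split.
- by move=> t'; rewrite ffunE ler0n.
- by move=> t' t'N; rewrite ffunE; case: eqP t'N => // ->; rewrite t_path.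
- by rewrite (bigD1 t) //= ffunE eqxx big1 ?addr0 // => t' /negbTE t't; rewrite ffunE t't.
- move=> f; rewrite (bigD1 t) //= [X in X * _]ffunE eqxx mul1r big1 ?addr0 //.
  move=> t' /negbTE t't.
  by rewrite [X in X * _]ffunE t't mul0r.
Qed.

Lemma path_polytope_comb (y : {ffun edge n -> R}) (lam : {ffun p.+1.-tuple V -> R}) :
  (forall f, y f = \sum_t lam t * incid R t f) ->
  (y : VV) = \sum_t lam t *: (incid R t : VV).
Proof.
move=> y_comb; apply/ffunP => f; rewrite sum_ffunE y_comb.
by apply: eq_bigr => t _; rewrite [RHS]ffunE.
Qed.

Lemma path_polytope_ge0 (y : {ffun edge n -> R}) : path_polytope p y -> 0 <= y e.
Proof.
case=> lam [lam_ge0 _ _ ->]; apply: sumr_ge0 => t _.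
by rewrite mulr_ge0 // ffunE; case: ifP.
Qed.

Lemma path_polytope_sum (y : {ffun edge n -> R}) : path_polytope p y -> \sum_f y f = p%:R.
Proof.
case=> lam [_ lam_paths lam_sum1 y_comb]; under eq_bigr do rewrite y_comb.
rewrite exchange_big (eq_bigr (fun t => lam t * p%:R)) => [|t _].
  by rewrite -mulr_suml lam_sum1 mul1r.
rewrite -mulr_sumr.
have [t_path | /lam_paths ->] := boolP (is_pathp t); last by rewrite !mul0r.
rewrite (eq_bigr _ (fun f _ => congr1 (fun v : VV => v f) (incid_path t_path))).
have t_uniq : uniq t by case/and3P: t_path.
by rewrite sum_pvec // size_tuple.
Qed.

Lemma path_polytope_span (y : {ffun edge n -> R}) :
  path_polytope p y -> (y : VV) \in <<path_vecs>>%VS.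
Proof.
case=> lam [_ lam_paths _ /path_polytope_comb ->]; apply: memv_suml => t _.
have [t_path | /lam_paths ->] := boolP (is_pathp t); last by rewrite scale0r mem0v.
by apply/memvZ/memv_span/mapP; exists t; rewrite ?mem_paths.
Qed.

Lemma face_span_mem (y : {ffun edge n -> R}) :
  path_polytope p y -> y e = 0 -> (y : VV) \in face.
Proof.
case=> lam [lam_ge0 lam_paths _ y_comb] ye0; rewrite (path_polytope_comb y_comb).
apply: memv_suml => t _; have [t_path | /lam_paths ->] := boolP (is_pathp t); last first.
  by rewrite scale0r mem0v.
have [te0 | te_neq0] := eqVneq (incid R t e) 0.
  by apply/memvZ/memv_span/mapP; exists t; rewrite // mem_filter te0 eqxx mem_paths.
suff -> : lam t = 0 by rewrite scale0r mem0v.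
have term_ge0 t' : 0 <= lam t' * incid R t' e by rewrite mulr_ge0 // ffunE; case: ifP.
move: ye0; rewrite y_comb => /eqP; rewrite psumr_eq0 // => /allP /(_ t (mem_index_enum _)).
by rewrite mulf_eq0 (negbTE te_neq0) orbF => /eqP.
Qed.

Lemma face_span_eq0 (v : VV) : v \in face -> v e = 0.
Proof.
move=> v_face; rewrite (coord_span (X := in_tuple face_vecs) v_face) sum_ffunE.
apply: big1 => i _; rewrite ffunE.
have /mapP[t] : (in_tuple face_vecs)`_i \in face_vecs by rewrite mem_nth.
by rewrite mem_filter => /andP[/eqP te0 _] ->; rewrite te0 scaler0.
Qed.

Lemma dim_face_gt0 : (0 < \dim face)%N.
Proof.
have [q [q_path qe0]] := exists_pathseq_avoid.
rewrite lt0n dimv_eq0; apply: contraTneq (pvec_in_face q_path qe0) => ->.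
rewrite memv0; apply/eqP => q0.
have q_uniq : uniq q by case/and3P: q_path.
have := sum_pvec R q_uniq; rewrite q0 big1 => [|f _]; last by rewrite ffunE.
case/and3P: q_path => _ /eqP -> _ /eqP; rewrite eq_sym pnatr_eq0 /=; lia.
Qed.

Lemma dim_path_span : \dim <<path_vecs>> = (\dim face).+1.
Proof.
have [q0 [q0_path q0e]] := exists_pathseq_through_e.
have [t0 [t0_path t0q0]] := pathseq_tuple q0_path.
pose x0 : VV := incid R t0.
have x0E : x0 = pvec q0 by rewrite /x0 incid_path.
have x0e : x0 e != 0 by rewrite x0E.
have x0_neq0 : x0 != 0 by apply: contraNneq x0e => ->; rewrite ffunE.
suff -> : <<path_vecs>>%VS = (face + <[x0]>)%VS.
  rewrite dimv_disjoint_sum ?dim_vline ?x0_neq0 ?addn1 //.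
  apply/eqP; rewrite -subv0; apply/subvP => v; rewrite memv_cap memv0.
  case/andP => /face_span_eq0 ve0 /vlineP[k vE]; move: ve0.
  by rewrite vE ffunE => /eqP; rewrite mulf_eq0 (negbTE x0e) orbF => /eqP->; rewrite scale0r.
apply/eqP; rewrite eqEsubv; apply/andP; split.
- apply/span_subvP => x /mapP[t]; rewrite mem_paths => t_path ->.
  have [te0 | te_neq0] := eqVneq (incid R t e) 0.
    rewrite -[X in X \in _]addr0; apply: memv_add; last exact: mem0v.
    apply/memv_span/mapP; exists t; last by [].
    by rewrite mem_filter te0 eqxx mem_paths.
  rewrite -[X in X \in _](subrK x0); apply: memv_add; last exact: memv_line.
  rewrite incid_path // x0E; apply: pvec_eqv_through_e q0e.
  + exact: pathseq_of_path.
  + exact: q0_path.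
  + by rewrite -incid_path.
- rewrite subv_add; apply/andP; split.
  + apply: sub_span => x /mapP[t]; rewrite mem_filter => /andP[_ t_path] ->.
    by apply/mapP; exists t.
  + by rewrite -memvE; apply/memv_span/mapP; exists t0; rewrite ?mem_paths.
Qed.

End PathFace.

Unset Implicit Arguments.

Theorem mainTheorem19 (R : realFieldType) (n p : nat) (hp4 : (4 <= p)%N) (hpn : (p < n)%N)
  (e : edge n) (he : val e != (ord0, ord_max)) :
  (forall y, @path_polytope R n p y -> 0 <= y e) /\
  exists d : nat,
    has_affdim (@path_polytope R n p) d.+1 /\
    has_affdim (fun y => @path_polytope R n p y /\ y e = 0) d.
Proof.
have p_neq0 : (p%:R : R) != 0 by rewrite pnatr_eq0; apply/eqP; lia.
split=> [y|]; first exact: path_polytope_ge0.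
have [d dim_face] : exists d, \dim <<face_vecs R p e>> = d.+1.
  by exists (\dim <<face_vecs R p e>>).-1; rewrite prednK ?(dim_face_gt0 R hp4 hpn he).
exists d; split.
- apply: (has_affdim_span (X := path_vecs R n p) p_neq0).
  + move=> x /mapP[t]; rewrite mem_paths => t_path ->; exact: path_polytope_incid.
  + exact: path_polytope_span.
  + exact: path_polytope_sum.
  + by rewrite (dim_path_span R hp4 hpn he) dim_face.
- apply: (has_affdim_span (X := face_vecs R p e) p_neq0).
  + move=> x /mapP[t]; rewrite mem_filter mem_paths => /andP[/eqP te0 t_path] ->.
    by split; first exact: path_polytope_incid.
  + by move=> y [y_P ye0]; apply: face_span_mem.
  + by move=> y [y_P _]; apply: path_polytope_sum.
  + exact: dim_face.
Qed.
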